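(* In the protocol with double clipping, fix the graph $G$, a user $v_i$, a value $\tilde d_i>0$ of her noisy degree, and an index $j<i$ with $a_{i,j}=1$ in her clipped neighbor list (so that her clipped list has at most $\tilde d_i$ ones among indices $<i$), and let $\kappa_i\in[\mu^*\tilde d_i,\tilde d_i]$. Then, with probability taken over the first-round randomness, $$\Pr(t_{i,j}>\kappa_i)\le\exp\!\Big[-\tilde d_i\,D\big(\tfrac{\kappa_i}{\tilde d_i}\,\big\|\,\mu\big)\Big]\ \text{(variant F)},\qquad \Pr(t_{i,j}>\kappa_i)\le\exp\!\Big[-\tilde d_i\,D\big(\tfrac{\kappa_i}{\tilde d_i}\,\big\|\,\mu^2\big)\Big]\ \text{(variant O)},$$ $$\Pr(t_{i,j}>\kappa_i)\le\mu\exp\!\Big[-\tilde d_i\,D\big(\tfrac{\max\{\kappa_i,\mu^2\tilde d_i\}}{\tilde d_i}\,\big\|\,\mu^2\big)\Big]\ \text{(variant T)}.$$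
   Context: $D(p_1\|p_2)=p_1\log\frac{p_1}{p_2}+(1-p_1)\log\frac{1-p_1}{1-p_2}$ is the KL divergence between Bernoulli distributions. $ARR_{\epsilon,\mu}:\{0,1\}\to\{0,1\}$ satisfies $\Pr[ARR_{\epsilon,\mu}(1)=1]=\mu$, $\Pr[ARR_{\epsilon,\mu}(0)=1]=\mu e^{-\epsilon}$, with $\mu\in(0,\frac{e^{\epsilon_1}}{e^{\epsilon_1}+1}]$. Round 1: each $v_\ell$ computes $r_{\ell,m}=ARR_{\epsilon_1,\mu}(a_{\ell,m})$ for all $m<\ell$ (all independent, using the original adjacency matrix); $E'=\{\{v_m,v_\ell\}:m<\ell,r_{\ell,m}=1\}$. $\mu^*=\mu,\mu^2,\mu^3$ and $M_i=\{\{v_j,v_k\}\in E':j<k<i\}$, $\{\{v_j,v_k\}\in E':\{v_i,v_k\}\in E',j<k<i\}$, $\{\{v_j,v_k\}\in E':\{v_i,v_j\}\in E',\{v_i,v_k\}\in E',j<k<i\}$ in variants F, O, T respectively. The noisy degree $\tilde d_i$ is computed in round 2 with randomness independent of round 1, and $v_i$'s neighbor list is clipped (by removing ones) so that at most $\tilde d_i$ entries $a_{i,m}$, $m<i$, equal 1. Then $t_{i,j}=|\{k:j<k<i,a_{i,k}=1,\{v_j,v_k\}\in M_i\}|$ with $a_{i,k}$ from the clipped list. *)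

From HB Require Import structures.
From mathcomp Require Import all_boot all_order all_algebra.
From mathcomp Require Import all_classical all_reals all_analysis.
Set Implicit Arguments. Unset Strict Implicit. Unset Printing Implicit Defensive.
Import Order.TTheory GRing.Theory Num.Theory.
Local Open Scope ring_scope.

(* Users are v_0, ..., v_(n-1), indexed by 'I_n; the index order is the
   order on naturals. *)

(* KL divergence between Bernoulli distributions (ln 0 = 0 in MathComp,
   giving the usual convention 0 log 0 = 0). *)
Definition klB (R : realType) (p1 p2 : R) : R :=
  p1 * ln (p1 / p2) + (1 - p1) * ln ((1 - p1) / (1 - p2)).

(* Pr[ARR_{eps,mu}(b) = 1] *)
Definition arr_prob (R : realType) (eps mu : R) (b : bool) : R :=
  if b then mu else mu * expR (- eps).

Definition bern (R : realType) (q : R) (x : bool) : R :=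
  if x then q else 1 - q.

(* First-round randomness: r (l, m) = r_{l,m} for m < l.  All these bits are
   independent, r_{l,m} = ARR_{eps,mu}(a_{l,m}); coordinates (l, m) with
   ~ (m < l) are unused and fixed to false. *)
Definition round1_weight (R : realType) (n : nat) (a : 'I_n -> 'I_n -> bool)
  (eps mu : R) (r : {ffun 'I_n * 'I_n -> bool}) : R :=
  \prod_(p : 'I_n * 'I_n)
     (if (p.2 < p.1)%N then bern (arr_prob eps mu (a p.1 p.2)) (r p)
      else (if r p then 0 else 1)).

Definition round1_Pr (R : realType) (n : nat) (a : 'I_n -> 'I_n -> bool)
  (eps mu : R) (E : pred {ffun 'I_n * 'I_n -> bool}) : R :=
  \sum_(r | E r) round1_weight a eps mu r.

Definition inE' (n : nat) (r : {ffun 'I_n * 'I_n -> bool}) (x y : 'I_n) : bool :=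
  if (x < y)%N then r (y, x) else if (y < x)%N then r (x, y) else false.

Inductive variant := VarF | VarO | VarT.

Definition inM (n : nat) (var : variant) (r : {ffun 'I_n * 'I_n -> bool})
  (i j k : 'I_n) : bool :=
  [&& (j < k)%N, (k < i)%N, inE' r j k &
   match var with
   | VarF => true
   | VarO => inE' r i k
   | VarT => inE' r i j && inE' r i k
   end].

(* t_{i,j}, where ac is v_i's clipped neighbor list (ac m = a_{i,m}) *)
Definition t_ij (n : nat) (var : variant) (r : {ffun 'I_n * 'I_n -> bool})
  (ac : 'I_n -> bool) (i j : 'I_n) : nat :=
  #|[set k : 'I_n | [&& (j < k)%N, (k < i)%N, ac k & inM var r i j k]]|.

Definition mu_star (R : realType) (var : variant) (mu : R) : R :=
  match var with VarF => mu | VarO => mu ^+ 2 | VarT => mu ^+ 3 end.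

Definition tail_bound (R : realType) (var : variant) (mu d kappa : R) : R :=
  match var with
  | VarF => expR (- (d * klB (kappa / d) mu))
  | VarO => expR (- (d * klB (kappa / d) (mu ^+ 2)))
  | VarT => mu * expR (- (d * klB (Num.max kappa (mu ^+ 2 * d) / d) (mu ^+ 2)))
  end.

(* Write t_{i,j} as a count of candidates k (clipped neighbours of v_i with
   j < k < i) whose witness bits are all 1: r_{k,j} in variant F, r_{k,j} and
   r_{i,k} in variants O and T, where in variant T the count is moreover
   killed unless the shared bit r_{i,j} is 1.  The witness sets of distinct
   candidates and the shared bit are disjoint sets of independent first-round
   bits, each equal to 1 with probability at most mu, so the moment generating
   function factorises: E[x^{t_{i,j}}] <= m (1 + (x - 1) p)^N with p = mu or
   mu^2, m = Pr[r_{i,j} = 1] <= mu in variant T and m = 1 otherwise, and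
   N <= d candidates.  Chernoff's bound at the optimal x then gives
   m exp(-d D(kappa/d || p)); when kappa < p d (possible only in variant T)
   the trivial bound m is what the statement asks for, since D(p || p) = 0. *)

From mathcomp Require Import all_boot all_order all_algebra.
From mathcomp Require Import all_classical all_reals all_analysis.
From mathcomp Require Import ring lra zify.
Set Implicit Arguments. Unset Strict Implicit. Unset Printing Implicit Defensive.
Import Order.TTheory GRing.Theory Num.Theory.
Local Open Scope ring_scope.

Lemma forall_in_set1 (T : finType) (a : T) (P : pred T) :
  [forall x in [set a], P x] = P a.
Proof. by apply/forall_inP/idP => [-> | Pa x /set1P ->] //; rewrite inE. Qed.

Lemma forall_in_set2 (T : finType) (a b : T) (P : pred T) :
  [forall x in [set a; b], P x] = P a && P b.
Proof.
apply/forall_inP/andP => [allP | [Pa Pb] x /set2P[] ->] //.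
by rewrite !allP // !inE eqxx ?orbT.
Qed.

Lemma exprn_card_set (R : comPzRingType) (T : finType) (K : {set T}) (P : pred T) (x : R) :
  x ^+ #|[set k in K | P k]| = \prod_(k in K) (1 + (x - 1) * (P k)%:R).
Proof.
rewrite -prodr_const (eq_bigl (fun k => (k \in K) && P k)) => [|k]; last by rewrite inE.
rewrite big_mkcondr /=; apply: eq_bigr => k _.
by case: (P k); rewrite ?mulr1 ?mulr0 ?addr0 // addrC subrK.
Qed.

Lemma natr_forall (R : comPzSemiRingType) (T : finType) (C : {pred T}) (P : pred T) :
  ([forall x in C, P x])%:R = \prod_(x in C) (P x)%:R :> R.
Proof.
have [allP | /forall_inPn[x Cx /negbTE Px]] := boolP [forall x in C, P x].
  by rewrite big1 // => x Cx; rewrite (forall_inP allP).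
by rewrite (bigD1 x) //= Px mul0r.
Qed.

Definition prod_weight (R : comPzRingType) (I : finType) (f : I -> bool -> R)
  (r : {ffun I -> bool}) : R := \prod_p f p (r p).

Section ProductWeights.
Variables (R : comPzRingType) (I : finType) (f : I -> bool -> R).

Local Notation w := (prod_weight f).

Lemma sum_weight_prod (g : I -> bool -> R) :
  \sum_r w r * \prod_p g p (r p) =
  \prod_p (f p true * g p true + f p false * g p false).
Proof.
transitivity (\prod_p \sum_(b : bool) f p b * g p b).
  by rewrite bigA_distr_bigA; apply: eq_bigr => r _; rewrite -big_split.
by apply: eq_bigr => p _; rewrite big_bool.
Qed.

Hypothesis f_sum1 : forall p, f p true + f p false = 1.

Lemma sum_weight_indicator (C : {set I}) :
  \sum_r w r * ([forall p in C, r p])%:R = \prod_(p in C) f p true.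
Proof.
under [LHS]eq_bigr => r _ do rewrite natr_forall big_mkcond /=.
rewrite (sum_weight_prod (fun p b => if p \in C then b%:R else 1)).
rewrite [RHS]big_mkcond; apply: eq_bigr => p _.
by case: (p \in C); rewrite /= ?mulr1 ?mulr0 ?addr0.
Qed.

Variables (J : eqType) (B : J -> {set I}).

Lemma sum_weight_indicator_prod (B0 : {set I}) (c : R) (s : seq J) :
  uniq s -> {in s, forall k, [disjoint B0 & B k]} ->
  {in s &, forall k l, k != l -> [disjoint B k & B l]} ->
  \sum_r w r * (([forall p in B0, r p])%:R *
                \prod_(k <- s) (1 + c * ([forall p in B k, r p])%:R)) =
  \prod_(p in B0) f p true * \prod_(k <- s) (1 + c * \prod_(p in B k) f p true).
Proof.
elim: s B0 => [|k s IH] B0 /=.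
  by move=> _ _ _; under eq_bigr => r _ do rewrite big_nil mulr1;
     rewrite sum_weight_indicator big_nil mulr1.
move=> /andP[ks uniq_s] disj0 disjB.
have disjB_s : {in s &, forall k l, k != l -> [disjoint B k & B l]}.
  by move=> l l' ls l's; apply: disjB; rewrite inE ?ls ?l's orbT.
have disj_k l : l \in s -> [disjoint B k & B l].
  by move=> ls; apply: disjB; rewrite ?inE ?eqxx ?ls ?orbT //; apply: contraNneq ks => ->.
have disj0_s l : l \in s -> [disjoint B0 & B l].
  by move=> ls; apply: disj0; rewrite inE ls orbT.
have disjU_s l : l \in s -> [disjoint B0 :|: B k & B l].
  by move=> ls; rewrite -setI_eq0 finset.setIUl finset.setU_eq0 !setI_eq0 disj0_s ?disj_k.
have prodU (g : I -> R) :
    \prod_(p in B0 :|: B k) g p = \prod_(p in B0) g p * \prod_(p in B k) g p.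
  by rewrite -bigU ?disj0 ?mem_head //; apply: eq_bigl => p; rewrite !inE.
(* Expanding the factor of [k] splits the sum in two; in the second part the
   indicators of [B0] and [B k] merge into that of [B0 :|: B k], which is
   still disjoint from the remaining blocks, so the induction applies twice. *)
transitivity (\sum_r w r * (([forall p in B0, r p])%:R *
                  \prod_(l <- s) (1 + c * ([forall p in B l, r p])%:R)) +
   c * \sum_r w r * (([forall p in B0 :|: B k, r p])%:R *
                  \prod_(l <- s) (1 + c * ([forall p in B l, r p])%:R))).
  rewrite mulr_sumr -big_split; apply: eq_bigr => r _ /=.
  by rewrite big_cons (natr_forall _ (B0 :|: B k)) prodU -!natr_forall; ring.
by rewrite !IH // prodU big_cons; ring.
Qed.
End ProductWeights.

Lemma sum_weight_mgf_le (R : numDomainType) (I J : finType) (f : I -> bool -> R)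
    (B0 : {set I}) (B : J -> {set I}) (K : {set J}) (m p x : R) :
  (forall q, f q true + f q false = 1) -> (forall q, 0 <= f q true) ->
  {in K, forall k, [disjoint B0 & B k]} ->
  {in K &, forall k l, k != l -> [disjoint B k & B l]} ->
  \prod_(q in B0) f q true <= m -> {in K, forall k, \prod_(q in B k) f q true <= p} ->
  1 <= x ->
  \sum_(r : {ffun I -> bool}) prod_weight f r *
     (([forall q in B0, r q])%:R * x ^+ #|[set k in K | [forall q in B k, r q]]|)
    <= m * (1 + (x - 1) * p) ^+ #|K|.
Proof.
move=> f_sum1 f_ge0 disj0 disjB B0_le B_le x_ge1.
under eq_bigr do rewrite exprn_card_set -big_enum.
rewrite sum_weight_indicator_prod ?enum_uniq //; last 2 first.
- by move=> k; rewrite mem_enum; apply: disj0.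
- by move=> k l; rewrite !mem_enum; apply: disjB.
have x1_ge0 : 0 <= x - 1 by rewrite subr_ge0.
rewrite big_enum /= -prodr_const; apply: ler_pM.
- by apply: prodr_ge0 => q _.
- by apply: prodr_ge0 => k _; rewrite addr_ge0 ?mulr_ge0 ?prodr_ge0.
- exact: B0_le.
by apply: ler_prod => k Kk; rewrite addr_ge0 ?mulr_ge0 ?prodr_ge0 //= lerD2l ler_wpM2l ?B_le.
Qed.

Lemma markov_sum (R : numDomainType) (T : finType) (w g : T -> R) (E : pred T) :
  (forall t, 0 <= w t) -> (forall t, 0 <= g t) -> (forall t, E t -> 1 <= g t) ->
  \sum_(t | E t) w t <= \sum_t w t * g t.
Proof.
move=> w_ge0 g_ge0 gE; rewrite [X in _ <= X](bigID E) /= -[X in X <= _]addr0.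
apply: lerD; last by apply: sumr_ge0 => t _; rewrite mulr_ge0.
by apply: ler_sum => t Et; rewrite ler_peMr // gE.
Qed.

Section Chernoff.
Variable R : realType.

Lemma klB_xx (p : R) : klB p p = 0.
Proof.
rewrite /klB; have [->|p_neq0] := eqVneq p 0.
  by rewrite mul0r subr0 divr1 ln1 mulr0 add0r.
have [->|q_neq0] := eqVneq (1 - p) 0.
  by rewrite mul0r addr0 divff // ln1 mulr0.
by rewrite !divff // ln1 !mulr0 addr0.
Qed.

(* The minimiser of x |-> x ^ (- q d) * (1 + (x - 1) p) ^ d. *)
Definition chernoff_base (p q : R) := q * (1 - p) / (p * (1 - q)).

Lemma chernoff_base_bound (p q d : R) (N : nat) :
  0 < p -> p <= q -> q < 1 -> 0 < d -> N%:R <= d ->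
  1 <= chernoff_base p q /\
  expR (- (q * d) * ln (chernoff_base p q)) * (1 + (chernoff_base p q - 1) * p) ^+ N
    <= expR (- (d * klB q p)).
Proof.
move=> p_gt0 pq q_lt1 d_gt0 Nd.
have q_gt0 : 0 < q by apply: lt_le_trans pq.
have q'_gt0 : 0 < 1 - q by rewrite subr_gt0.
have p'_gt0 : 0 < 1 - p by rewrite subr_gt0; apply: le_lt_trans q_lt1.
set y := (1 - p) / (1 - q).
have y_ge1 : 1 <= y by rewrite ler_pdivlMr // mul1r lerD2l lerN2.
have qp_ge1 : 1 <= q / p by rewrite ler_pdivlMr // mul1r.
have -> : chernoff_base p q = q / p * y.
  by rewrite /chernoff_base /y; field; rewrite !gt_eqF.
have -> : 1 + (q / p * y - 1) * p = y.
  by rewrite /y; field; rewrite !gt_eqF.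
split; first by rewrite -[1]mulr1 ler_pM.
have y_gt0 : 0 < y := lt_le_trans ltr01 y_ge1.
rewrite -[y ^+ N]lnK ?posrE ?exprn_gt0 // lnXn // -mulr_natl -expRD ler_expR.
have -> : klB q p = q * ln (q / p) - (1 - q) * ln y.
  by rewrite /klB -[ln y]opprK -lnV ?posrE // /y invf_div mulrN opprK.
rewrite lnM ?posrE ?divr_gt0 //.
have : N%:R * ln y <= d * ln y by rewrite ler_wpM2r // ln_ge0.
lra.
Qed.

Lemma expR_ln_le_exprn (x a : R) (n : nat) :
  1 <= x -> a <= n%:R -> expR (a * ln x) <= x ^+ n.
Proof.
move=> x_ge1 a_le; have x_gt0 : 0 < x := lt_le_trans ltr01 x_ge1.
rewrite -[x ^+ n]lnK ?posrE ?exprn_gt0 // lnXn // -mulr_natl ler_expR.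
by rewrite ler_wpM2r // ln_ge0.
Qed.

Lemma chernoff_bound (T : finType) (w : T -> R) (Y : pred T) (X : T -> nat)
    (N : nat) (m p d kappa : R) :
  (forall t, 0 <= w t) -> 0 <= m -> 0 < p -> 0 < d -> N%:R <= d ->
  (forall x, 1 <= x ->
     \sum_t w t * ((Y t)%:R * x ^+ X t) <= m * (1 + (x - 1) * p) ^+ N) ->
  p * d <= kappa -> kappa < d ->
  \sum_(t | Y t && (kappa < (X t)%:R)) w t <= m * expR (- (d * klB (kappa / d) p)).
Proof.
move=> w_ge0 m_ge0 p_gt0 d_gt0 Nd mgf pd_le kappa_lt.
set q := kappa / d.
have kappaE : kappa = q * d by rewrite /q divfK ?gt_eqF.
have pq : p <= q by rewrite /q ler_pdivlMr.
have q_lt1 : q < 1 by rewrite /q ltr_pdivrMr ?mul1r.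
have [x_ge1 tilted] := chernoff_base_bound p_gt0 pq q_lt1 d_gt0 Nd.
set x := chernoff_base p q in x_ge1 tilted *.
pose tilt := expR (- (q * d) * ln x).
apply: (@le_trans _ _ (\sum_t w t * ((Y t)%:R * x ^+ X t * tilt))).
  apply: markov_sum => // t.
    by rewrite /tilt !mulr_ge0 ?ler0n ?exprn_ge0 ?expR_ge0 // (le_trans ler01).
  case/andP => -> /ltW kappa_le_X; rewrite mul1r /tilt mulNr expRN.
  by rewrite ler_pdivlMr ?expR_gt0 // mul1r -kappaE expR_ln_le_exprn.
under eq_bigr do rewrite mulrA.
rewrite -mulr_suml; apply: le_trans (ler_wpM2r (expR_ge0 _) (mgf x x_ge1)) _.
by rewrite -mulrA ler_wpM2l // mulrC.
Qed.

Lemma chernoff_tail (T : finType) (w : T -> R) (Y : pred T) (X : T -> nat)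
    (N : nat) (m p d kappa : R) :
  (forall t, 0 <= w t) -> (forall t, X t <= N)%N ->
  0 < p -> 0 < d -> N%:R <= d ->
  (forall x, 1 <= x ->
     \sum_t w t * ((Y t)%:R * x ^+ X t) <= m * (1 + (x - 1) * p) ^+ N) ->
  \sum_(t | Y t && (kappa < (X t)%:R)) w t
    <= m * expR (- (d * klB (Num.max kappa (p * d) / d) p)).
Proof.
move=> w_ge0 X_le p_gt0 d_gt0 Nd mgf.
have mgf1 : \sum_t w t * (Y t)%:R <= m.
  have := mgf 1 (lexx _); rewrite subrr mul0r addr0 expr1n mulr1.
  by under eq_bigr do rewrite expr1n mulr1.
have m_ge0 : 0 <= m.
  by apply: le_trans mgf1; apply: sumr_ge0 => t _; rewrite mulr_ge0.
have [kappa_lt|pd_le] := ltP kappa (p * d).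
  rewrite mulfK ?gt_eqF // klB_xx mulr0 oppr0 expR0 mulr1.
  by apply: le_trans mgf1; apply: markov_sum => // t /andP[->].
have [d_le|kappa_lt] := leP d kappa.
  rewrite big1 ?mulr_ge0 ?expR_ge0 // => t /andP[_].
  by rewrite ltNge (le_trans _ d_le) // (le_trans _ Nd) // ler_nat.
exact: chernoff_bound w_ge0 m_ge0 p_gt0 d_gt0 Nd mgf pd_le kappa_lt.
Qed.
End Chernoff.

Definition round1_pmf (R : realType) (n : nat) (a : 'I_n -> 'I_n -> bool) (eps mu : R)
    (p : 'I_n * 'I_n) (b : bool) : R :=
  if (p.2 < p.1)%N then bern (arr_prob eps mu (a p.1 p.2)) b else (if b then 0 else 1).

Section Round1Pmf.
Variables (R : realType) (n : nat) (a : 'I_n -> 'I_n -> bool) (eps mu : R).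
Hypotheses (eps_ge0 : 0 <= eps) (mu_ge0 : 0 <= mu) (mu_le1 : mu <= 1).

Lemma arr_prob_le b : arr_prob eps mu b <= mu.
Proof. by case: b => //=; rewrite ler_piMr // expR_le1 oppr_le0. Qed.

Lemma round1_pmf_sum1 p : round1_pmf a eps mu p true + round1_pmf a eps mu p false = 1.
Proof. by rewrite /round1_pmf; case: ifP; rewrite /= ?add0r // addrC subrK. Qed.

Lemma round1_pmf_ge0 p b : 0 <= round1_pmf a eps mu p b.
Proof.
rewrite /round1_pmf; case: ifP; case: b => //= _.
- by rewrite /arr_prob; case: (a _ _); rewrite ?mulr_ge0 ?expR_ge0.
- by rewrite subr_ge0 (le_trans (arr_prob_le _)).
Qed.

Lemma round1_pmf_true_le p : round1_pmf a eps mu p true <= mu.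
Proof. by rewrite /round1_pmf; case: ifP => //= _; exact: arr_prob_le. Qed.

End Round1Pmf.

(* [(k, j)], [(i, k)] and [(i, j)] are the coordinates of the noisy bits of the
   edges {v_j, v_k}, {v_i, v_k} and {v_i, v_j} when j < k < i. *)
Definition shared_pairs (n : nat) (var : variant) (i j : 'I_n) : {set 'I_n * 'I_n} :=
  if var is VarT then [set (i, j)] else finset.set0.

Definition witness_pairs (n : nat) (var : variant) (i j k : 'I_n) : {set 'I_n * 'I_n} :=
  if var is VarF then [set (k, j)] else [set (k, j); (i, k)].

Definition candidates (n : nat) (ac : 'I_n -> bool) (i j : 'I_n) : {set 'I_n} :=
  [set k : 'I_n | [&& (j < k)%N, (k < i)%N & ac k]].

Definition shared_prob (R : realType) (var : variant) (mu : R) : R :=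
  if var is VarT then mu else 1.

Definition witness_prob (R : realType) (var : variant) (mu : R) : R :=
  if var is VarF then mu else mu ^+ 2.

Section Witnesses.
Variables (n : nat) (var : variant) (i j : 'I_n).
Hypothesis j_lt_i : (j < i)%N.

Lemma t_ij_witnesses (r : {ffun 'I_n * 'I_n -> bool}) (ac : 'I_n -> bool) :
  t_ij var r ac i j =
  if [forall p in shared_pairs var i j, r p]
  then #|[set k in candidates ac i j | [forall p in witness_pairs var i j k, r p]]|
  else 0%N.
Proof.
have rij : inE' r i j = r (i, j) by rewrite /inE' ltnNge (ltnW j_lt_i) j_lt_i.
rewrite /t_ij /shared_pairs; case: ifP => [shared_r | shared_nr].
- apply: eq_card => k; rewrite !inE /inM.
  case jk : (j < k)%N; case ki : (k < i)%N; rewrite ?andbF //=.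
  have -> : inE' r j k = r (k, j) by rewrite /inE' jk.
  have -> : inE' r i k = r (i, k) by rewrite /inE' ltnNge (ltnW ki) ki.
  rewrite /witness_pairs rij.
  case: var shared_r => [_|_|]; last rewrite forall_in_set1 => ->;
    by rewrite ?forall_in_set1 ?forall_in_set2; case: (ac k); rewrite ?andbT.
- apply: eq_card0 => k; rewrite !inE /inM rij.
  case: var shared_nr => [|| /negbT]; last first.
  + by rewrite forall_in_set1 => /negbTE ->; rewrite !andbF.
  all: by move/negP; case; apply/forall_inP => p; rewrite inE.
Qed.

Lemma disjoint_shared_witness (k : 'I_n) :
  (j < k)%N -> (k < i)%N -> [disjoint shared_pairs var i j & witness_pairs var i j k].
Proof.
move=> jk ki; apply/pred0P => -[u v] /=; rewrite /shared_pairs /witness_pairs.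
by case: var; rewrite !inE ?andFb // !xpair_eqE -!val_eqE /=; lia.
Qed.

Lemma disjoint_witness (k l : 'I_n) :
  (j < k)%N -> (k < i)%N -> (j < l)%N -> (l < i)%N -> k != l ->
  [disjoint witness_pairs var i j k & witness_pairs var i j l].
Proof.
move=> jk ki jl li; rewrite -val_eqE => /= kl.
apply/pred0P => -[u v] /=; rewrite /witness_pairs.
by case: var; rewrite !inE !xpair_eqE -!val_eqE /=; lia.
Qed.

Lemma prod_shared_le (R : realType) (f : 'I_n * 'I_n -> bool -> R) (mu : R) :
  (forall p, f p true <= mu) ->
  \prod_(p in shared_pairs var i j) f p true <= shared_prob var mu.
Proof. by rewrite /shared_pairs /shared_prob; case: var; rewrite ?big_set0 ?big_set1. Qed.

Lemma prod_witness_le (R : realType) (f : 'I_n * 'I_n -> bool -> R) (mu : R) (k : 'I_n) :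
  (k < i)%N -> (forall p, 0 <= f p true) -> (forall p, f p true <= mu) ->
  \prod_(p in witness_pairs var i j k) f p true <= witness_prob var mu.
Proof.
move=> ki f_ge0 f_le; rewrite /witness_pairs /witness_prob.
case: var; rewrite ?big_set1 // big_setU1 ?big_set1 ?expr2 ?ler_pM //=;
  by rewrite !inE xpair_eqE -val_eqE /=; lia.
Qed.

End Witnesses.

Lemma tail_boundE (R : realType) (var : variant) (mu d kappa : R) :
  mu_star var mu * d <= kappa ->
  tail_bound var mu d kappa = shared_prob var mu *
    expR (- (d * klB (Num.max kappa (witness_prob var mu * d) / d) (witness_prob var mu))).
Proof. by case: var => /= kappa_lo //; rewrite mul1r max_l. Qed.

Theorem theorem5p2 (R : realType) (n : nat) (a : 'I_n -> 'I_n -> bool)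
  (a_sym : forall x y, a x y = a y x) (a_irr : forall x, a x x = false)
  (eps mu : R) (eps_gt0 : 0 < eps) (mu_gt0 : 0 < mu)
  (mu_le : mu <= expR eps / (expR eps + 1))
  (i j : 'I_n) (d : R) (d_gt0 : 0 < d)
  (ac : 'I_n -> bool)
  (ac_clip : forall m : 'I_n, (m < i)%N -> ac m -> a i m)
  (ac_card : (#|[set m : 'I_n | (m < i)%N && ac m]|)%:R <= d)
  (j_lt_i : (j < i)%N) (ac_j : ac j)
  (var : variant) (kappa : R)
  (kappa_lo : mu_star var mu * d <= kappa) (kappa_hi : kappa <= d) :
  round1_Pr a eps mu (fun r => kappa < (t_ij var r ac i j)%:R)
    <= tail_bound var mu d kappa.
Proof.
have mu_lt1 : mu < 1.
  by apply: le_lt_trans mu_le _; rewrite ltr_pdivrMr ?mul1r ?ltrDl // addr_gt0 ?expR_gt0.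
have f_ge0 := round1_pmf_ge0 a (ltW eps_gt0) (ltW mu_gt0) (ltW mu_lt1).
have f_le := round1_pmf_true_le a (ltW eps_gt0) (ltW mu_gt0).
have kappa_gt0 : 0 < kappa.
  by apply: lt_le_trans kappa_lo; rewrite mulr_gt0 //; case: var; rewrite /= ?exprn_gt0.
have K_range k : k \in candidates ac i j -> (j < k)%N && (k < i)%N.
  by rewrite inE => /and3P[-> ->].
have card_K : #|candidates ac i j|%:R <= d.
  apply: le_trans ac_card; rewrite ler_nat; apply: subset_leq_card.
  by apply/fintype.subsetP => k; rewrite !inE => /and3P[_ -> ->].
rewrite tail_boundE // /round1_Pr.
rewrite (eq_bigl (fun r : {ffun _ -> bool} => [forall p in shared_pairs var i j, r p] &&
   (kappa < #|[set k in candidates ac i j | [forall p in witness_pairs var i j k, r p]]|%:R)))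
   => [|r]; last by rewrite t_ij_witnesses //; case: ifP; rewrite //= ltNge ltW.
apply: chernoff_tail card_K _ => //.
- by move=> r; apply: prodr_ge0 => p _; exact: f_ge0.
- by move=> r; apply/subset_leq_card/fintype.subsetP => k; rewrite inE => /andP[].
- by case: (var); rewrite /= ?exprn_gt0.
move=> x x_ge1; apply: (sum_weight_mgf_le (f := round1_pmf a eps mu)) => //.
- exact: round1_pmf_sum1.
- move=> k /K_range /andP[jk ki]; exact: disjoint_shared_witness.
- move=> k l /K_range /andP[jk ki] /K_range /andP[jl li]; exact: disjoint_witness.
- exact: prod_shared_le.
- move=> k /K_range /andP[_ ki]; exact: prod_witness_le.
Qed.
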